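(* Let $q$ be a prime power and $m$ a positive integer such that $q>2m+1$ and $q\not\equiv 0,1 \pmod{2i+1}$ for every $i\in\{1,\ldots,m\}$. Then $M(q-m,\,q-2m-1)\ge q(q-1)$.
   Context: For positive integers $n,d$, $M(n,d)$ denotes the maximum size of a permutation array on $n$ symbols (a non-empty subset of the symmetric group $S_n$) with Hamming distance $d$, i.e. in which any two distinct permutations differ in at least $d$ positions; the Hamming distance of $\sigma,\tau\in S_n$ is $|\{x:\sigma(x)\neq\tau(x)\}|$. *)

From mathcomp Require Import all_boot all_fingroup.
Set Implicit Arguments. Unset Strict Implicit. Unset Printing Implicit Defensive.

Definition hamming (n : nat) (s t : {perm 'I_n}) : nat := #|[set x | s x != t x]|.

Definition perm_array (n d : nat) (A : {set {perm 'I_n}}) : bool :=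
  (A != set0) && [forall s in A, forall t in A, (s != t) ==> (d <= hamming s t)].

Definition M (n d : nat) : nat :=
  \max_(A : {set {perm 'I_n}} | perm_array d A) #|A|.

Definition prime_power (q : nat) : Prop :=
  exists p k, prime p /\ 0 < k /\ q = p ^ k.

From mathcomp Require Import all_boot all_fingroup all_algebra.
From mathcomp Require Import cyclic finfield zify ring.
Set Implicit Arguments. Unset Strict Implicit. Unset Printing Implicit Defensive.
Import GRing.Theory FinRing.Theory.

(* Contracting a permutation at a point p deletes p from its cycle.  Contract every
   element of the sharply 2-transitive group AGL(1,q) at the same m points and restrict
   it to the remaining q-m points.  If the contractions of s != t agree at m+k points,
   then, undoing the contractions one point at a time, pi = s^-1 t has k pairwise
   disjoint invariant sets of odd size whose half sizes add up to at most m: undoing a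
   contraction at p either drops a set or merges the two sets containing s^-1 p and
   t^-1 p with p.  A non-identity affine map fixes at most one point, so for k >= 2 one
   of these sets is fixed-point free; every orbit of <pi> on it is regular, so the order
   of pi is odd and lies in [3, 2m+1].  Orders in AGL(1,q) divide q or q-1, which the
   congruence conditions exclude; hence contracted maps agree at at most m+1 of the
   q-m points. *)

Section Contraction.
Variable T : finType.
Implicit Types (p x : T) (s t : {perm T}) (ps : seq T).
Local Open Scope group_scope.

(* [contract p s] fixes [p], maps [s^-1 p] to [s p] and agrees with [s] elsewhere. *)
Definition contract p s : {perm T} := tperm p (s^-1 p) * s.

Definition contract_seq ps s : {perm T} := foldl (fun s p => contract p s) s ps.

Lemma contract_fix p s x : (x == p) || (s x == x) -> contract p s x = x.
Proof.
rewrite permM; case: (eqVneq x p) => [->|xp] /= /eqP sx; first by rewrite tpermL permKV.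
have spx : s^-1 p != x by apply: contraNneq xp => spx; rewrite -{1}sx -spx permKV.
by rewrite tpermD // eq_sym.
Qed.

Lemma contract_seq_fix ps s x : (x \in ps) || (s x == x) -> contract_seq ps s x = x.
Proof.
elim: ps s => [|p ps IH] s /=; first by move/eqP.
rewrite inE -orbA => /or3P[xp | xps | sx]; apply: IH; rewrite ?xps //.
  by rewrite contract_fix ?xp ?eqxx ?orbT.
by rewrite contract_fix ?sx ?eqxx ?orbT.
Qed.

Lemma contract_mulV p s t x :
  (t * s^-1) x =
  tperm p (s^-1 p) ((contract p t * (contract p s)^-1) (tperm p (t^-1 p) x)).
Proof. by rewrite /contract !invMg tpermV !permM tpermK tpermK. Qed.

Lemma contract_mulV_fix p s t : (contract p t * (contract p s)^-1) p = p.
Proof.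
by rewrite permM contract_fix ?eqxx //; apply: (canLR (permK _)); rewrite contract_fix ?eqxx.
Qed.

End Contraction.

Lemma half_addS_odd m n : odd m -> odd n -> (m + n).+1./2 = (m./2 + n./2).+1.
Proof.
move=> om on; rewrite -{1}(odd_double_half m) -{1}(odd_double_half n) om on.
have -> : (true + m./2.*2 + (true + n./2.*2)).+1 = true + (m./2 + n./2).+1.*2.
  by rewrite -!muln2 /=; lia.
by rewrite half_bit_double.
Qed.

Section OddStableFamilies.
Variable T : finType.
Implicit Types (pi : T -> T) (x y : T) (U Z : {set T}) (P : {set {set T}}).

Definition stable pi U := {in U, forall x, pi x \in U}.

Definition odd_stable_family pi Z P :=
  trivIset P /\ {in P, forall U, [/\ stable pi U, odd #|U| & [disjoint U & Z]]}.

Definition excess P := \sum_(U in P) #|U|./2.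

Lemma stable_tperm x y U : (x \in U) = (y \in U) -> stable (tperm x y) U.
Proof.
move=> xyU z zU; case: tpermP => [zx | zy | //]; first by rewrite -xyU -zx.
by rewrite xyU -zy.
Qed.

Lemma excess_subset P1 P2 : P1 \subset P2 -> excess P1 <= excess P2.
Proof.
move=> sP12; rewrite /excess [X in _ <= X](big_setID P1) /= (setIidPr sP12).
exact: leq_addr.
Qed.

Lemma excess_ge_half P U : U \in P -> #|U|./2 <= excess P.
Proof. by move=> UP; rewrite /excess (bigD1 U) //= leq_addr. Qed.

Lemma trivIset_block_eq P U V x : trivIset P -> U \in P -> V \in P ->
  x \in U -> x \in V -> U = V.
Proof. by move=> tP UP VP xU xV; rewrite -(def_pblock tP UP xU) (def_pblock tP VP xV). Qed.

Lemma odd_stable_family_fixpoints pi Z : exists P, [/\ odd_stable_family pi Z P, excess P = 0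
  & #|P| = #|[set x | (x \notin Z) && (pi x == x)]|].
Proof.
set A := [set x | _]; exists [set [set x] | x in A]; split.
- split.
    apply/trivIsetP => _ _ /imsetP[x _ ->] /imsetP[y _ ->] xy.
    by rewrite disjoints1 in_set1; apply: contraNneq xy => ->.
  move=> _ /imsetP[x + ->]; rewrite inE => /andP[xZ /eqP pix].
  split; rewrite ?cards1 ?disjoints1 //.
  by move=> y; rewrite in_set1 => /eqP ->; rewrite pix set11.
- by apply: big1 => _ /imsetP[x _ ->]; rewrite cards1.
- by rewrite card_imset //; apply: set1_inj.
Qed.

Section ContractionStep.
Variables (pi pi' : T -> T) (p a b : T) (Z : {set T}) (P' : {set {set T}}).
Hypotheses (pi'p : pi' p = p) (pZ : p \notin Z).
Hypothesis piE : forall x, pi x = tperm p a (pi' (tperm p b x)).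
Hypothesis famP' : odd_stable_family pi' (p |: Z) P'.

Let tP' : trivIset P' := famP'.1.

Lemma block_props U :
  U \in P' -> [/\ stable pi' U, odd #|U|, p \notin U & [disjoint U & Z]].
Proof.
move=> /famP'.2[sU oU dU]; split => //; first by rewrite (disjointFl dU) ?setU11.
by apply: disjointWr dU; apply: subsetUr.
Qed.

Lemma stable_pi U : (p \in U) = (a \in U) -> (p \in U) = (b \in U) ->
  stable pi' U -> stable pi U.
Proof.
move=> paU pbU sU x xU; rewrite piE; apply: stable_tperm => //.
by apply: sU; apply: stable_tperm.
Qed.

Let Q := [set U in P' | (a \notin U) && (b \notin U)].

Lemma Q_subset : Q \subset P'.
Proof. by apply/subsetP => U; rewrite inE => /andP[]. Qed.

Lemma odd_stable_family_Q : odd_stable_family pi Z Q.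
Proof.
split; first exact: trivIsetS Q_subset tP'.
move=> U; rewrite inE => /andP[UP /andP[aU bU]].
have [sU oU pU dU] := block_props UP.
by split => //; apply: stable_pi; rewrite ?(negbTE pU) ?(negbTE aU) ?(negbTE bU).
Qed.

Lemma card_P'_le :
  (forall U V, U \in P' -> V \in P' -> a \in U -> b \in V -> U = V) ->
  #|P'| <= #|Q|.+1.
Proof.
move=> abUV; rewrite -(cardsID Q P') (setIidPr Q_subset) -addn1 leq_add2l.
apply/card_le1_eqP => U V; rewrite !in_setD => /andP[+ UP] /andP[+ VP].
rewrite !inE UP VP /= !negb_and !negbK => /orP[aU | bU] /orP[aV | bV].
- exact: (trivIset_block_eq tP' VP UP aV aU).
- by rewrite (abUV _ _ UP VP aU bV).
- exact: abUV.
- exact: (trivIset_block_eq tP' VP UP bV bU).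
Qed.

Section Merge.
Variables Ua Ub : {set T}.
Hypotheses (UaP : Ua \in P') (UbP : Ub \in P') (aUa : a \in Ua) (bUb : b \in Ub).
Hypothesis neUab : Ua != Ub.

Let W := p |: (Ua :|: Ub).

Lemma stable_merge : stable pi W.
Proof.
have [sUa _ _ _] := block_props UaP; have [sUb _ _ _] := block_props UbP.
apply: stable_pi; rewrite ?inE ?eqxx ?aUa ?bUb ?orbT //.
move=> x; rewrite !inE => /or3P[/eqP -> | /sUa -> | /sUb ->]; rewrite ?orbT //.
by rewrite pi'p eqxx.
Qed.

Lemma card_merge : #|W| = (#|Ua| + #|Ub|).+1.
Proof.
have [_ _ pUa _] := block_props UaP; have [_ _ pUb _] := block_props UbP.
have dUab : [disjoint Ua & Ub] by apply: (trivIsetP tP').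
rewrite cardsU1 !inE negb_or pUa pUb cardsU (disjoint_setI0 dUab) cards0 subn0.
by rewrite add1n.
Qed.

Lemma odd_stable_family_merge : odd_stable_family pi Z (W |: Q).
Proof.
have [_ oUa pUa dUa] := block_props UaP; have [_ oUb pUb dUb] := block_props UbP.
have [tQ famQ] := odd_stable_family_Q.
have dWQ : {in Q, forall U, [disjoint W & U]}.
  move=> U; rewrite inE => /andP[UP /andP[aU bU]].
  have [_ _ pU _] := block_props UP.
  rewrite disjoints_subset !subUset sub1set inE pU -!disjoints_subset /=.
  apply/andP; split; apply: (trivIsetP tP') => //.
    by apply: contraNneq aU => <-.
  by apply: contraNneq bU => <-.
have Q0 : set0 \notin Q.
  by apply: contraTN isT => /famQ[_]; rewrite cards0.
split; first by case: (trivIsetU1 dWQ tQ Q0).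
move=> U; rewrite in_setU1 => /predU1P[-> | /famQ //].
split; first exact: stable_merge.
  by rewrite card_merge /= oddD oUa oUb.
by rewrite disjoints_subset !subUset sub1set inE pZ -!disjoints_subset dUa dUb.
Qed.

Lemma W_notin_Q : W \notin Q.
Proof. by rewrite /Q /W !inE !negb_and !negbK aUa !orbT. Qed.

Lemma excess_merge : excess (W |: Q) <= (excess P').+1.
Proof.
have [_ oUa _ _] := block_props UaP; have [_ oUb _ _] := block_props UbP.
have UaQ : Ua \notin Ub |: Q by rewrite !inE negb_or neUab aUa /= andbF.
have UbQ : Ub \notin Q by rewrite !inE bUb /= !andbF.
have sP' : Ua |: (Ub |: Q) \subset P' by rewrite !subUset !sub1set UaP UbP Q_subset.
have := excess_subset sP'; rewrite /excess !big_setU1 ?W_notin_Q //= card_merge.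
by rewrite half_addS_odd // addnA ltnS.
Qed.

Lemma card_P'_le_merge : #|P'| <= #|W |: Q|.+1.
Proof.
rewrite cardsU1 W_notin_Q; apply: leq_trans (_ : #|Ua |: (Ub |: Q)| <= _).
  apply/subset_leq_card/subsetP => U UP; rewrite !in_setU1.
  case UQ: (U \in Q); rewrite ?orbT //; move: UQ; rewrite inE UP /= => /negbT.
  rewrite negb_and !negbK => /orP[aU | bU].
    by rewrite (trivIset_block_eq tP' UP UaP aU aUa) eqxx.
  by rewrite (trivIset_block_eq tP' UP UbP bU bUb) eqxx orbT.
rewrite !cardsU1 addnA -[X in _ <= X]add2n leq_add2r.
by case: (_ \notin _); case: (_ \notin _).
Qed.

End Merge.

Lemma odd_stable_family_step : exists P,
  [/\ odd_stable_family pi Z P, #|P'| <= #|P|.+1 & excess P <= (excess P').+1].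
Proof.
case: (boolP [&& a \in cover P', b \in cover P' & pblock P' a != pblock P' b]).
  case/and3P => aP bP neab.
  have UaP := pblock_mem aP; have UbP := pblock_mem bP.
  have aUa : a \in pblock P' a by rewrite mem_pblock.
  have bUb : b \in pblock P' b by rewrite mem_pblock.
  exists (p |: (pblock P' a :|: pblock P' b) |: Q); split.
  - exact: odd_stable_family_merge.
  - exact: card_P'_le_merge.
  - exact: excess_merge.
move=> nomerge; exists Q; split.
- exact: odd_stable_family_Q.
- apply: card_P'_le => U V UP VP aU bV.
  rewrite -(def_pblock tP' UP aU) -(def_pblock tP' VP bV); apply/eqP.
  apply: contraNT nomerge => ->; rewrite andbT.
  by apply/andP; split; apply/bigcupP; [exists U | exists V].
- exact/leqW/excess_subset/Q_subset.
Qed.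

End ContractionStep.

End OddStableFamilies.

Lemma contract_seq_family (T : finType) (ps : seq T) (Z : {set T}) (s t : {perm T}) :
  uniq ps -> {in ps, forall p, p \notin Z} ->
  exists P, [/\ odd_stable_family (t * s^-1)%g Z P, excess P <= size ps &
    #|[set x | [&& x \notin Z, x \notin ps & contract_seq ps s x == contract_seq ps t x]]|
      <= size ps + #|P|].
Proof.
elim: ps Z s t => [|p ps IH] Z s t.
  move=> _ _; have [P [famP exP cardP]] := odd_stable_family_fixpoints (t * s^-1)%g Z.
  exists P; split => //; first by rewrite exP.
  rewrite add0n cardP; apply/subset_leq_card/subsetP => x; rewrite !inE /= permM.
  by case/andP => -> /eqP <-; rewrite permK eqxx.
move=> /andP[pps ups] psZ.
have pZ : p \notin Z by apply: psZ; rewrite mem_head.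
have psZ' : {in ps, forall q, q \notin p |: Z}.
  move=> q qps; rewrite !inE negb_or psZ ?inE ?qps ?orbT // andbT.
  by apply: contraNneq pps => <-.
have [P' [famP' exP' agreeP']] := IH (p |: Z) (contract p s) (contract p t) ups psZ'.
have [P [famP cardP exP]] :=
  odd_stable_family_step (contract_mulV_fix p s t) pZ (contract_mulV p s t) famP'.
exists P; split => //; first exact: leq_trans exP _.
apply: leq_trans (leq_trans agreeP' _); last by rewrite addSn -addnS leq_add2l.
apply/subset_leq_card/subsetP => x; rewrite !inE !negb_or.
by case: (x == p); case: (x \in Z).
Qed.

Definition perm_dist (X : finType) (s t : {perm X}) : nat := #|[set x | s x != t x]|.

Lemma perm_distxx (X : finType) (s : {perm X}) : perm_dist s s = 0.
Proof. by apply/eqP; rewrite cards_eq0; apply/eqP/setP => x; rewrite !inE eqxx. Qed.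

Section OrdinalRelabelling.
Variable X : finType.
Implicit Types s t : {perm X}.

Lemma ord_relabel_inj s : injective (fun i : 'I_#|X| => enum_rank (s (enum_val i))).
Proof. by move=> i j /enum_rank_inj /perm_inj /enum_val_inj. Qed.

Definition ord_relabel s : {perm 'I_#|X|} := perm (@ord_relabel_inj s).

Lemma ord_relabelE s i : ord_relabel s i = enum_rank (s (enum_val i)).
Proof. exact: permE. Qed.

Lemma ord_relabel_injective : injective ord_relabel.
Proof.
move=> s t e; apply/permP => x.
have := congr1 (fun r : {perm _} => r (enum_rank x)) e.
by rewrite /= !ord_relabelE enum_rankK => /enum_rank_inj.
Qed.

Lemma hamming_ord_relabel s t : hamming (ord_relabel s) (ord_relabel t) = perm_dist s t.
Proof.
rewrite /hamming /perm_dist -(card_imset _ (@enum_rank_inj X)); apply: eq_card => i.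
rewrite inE !ord_relabelE (inj_eq enum_rank_inj); apply/idP/imsetP => [st | [x + ->]].
  by exists (enum_val i); rewrite ?inE ?enum_valK.
by rewrite inE enum_rankK.
Qed.

Lemma card_le_M (Y : finType) (G : {set Y}) (f : Y -> {perm X}) d : 0 < d -> G != set0 ->
  {in G &, forall y y', y != y' -> d <= perm_dist (f y) (f y')} -> #|G| <= M #|X| d.
Proof.
move=> d0 G0 distG.
have finj : {in G &, injective f}.
  move=> s t sG tG fst; apply/eqP; apply: contraTT d0 => /(distG s t sG tG).
  by rewrite fst perm_distxx leqn0 => /eqP ->.
have cardA : #|[set ord_relabel (f s) | s in G]| = #|G|.
  by rewrite card_in_imset // => s t sG tG /ord_relabel_injective /finj; apply.
rewrite -cardA; apply: leq_bigmax_cond; apply/andP; split; first by rewrite imset_eq0.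
apply/forall_inP => _ /imsetP[s sG ->]; apply/forall_inP => _ /imsetP[t tG ->].
apply/implyP => st; rewrite hamming_ord_relabel; apply: distG => //.
by apply: contraNneq st => ->.
Qed.

End OrdinalRelabelling.

Section Restriction.
Variables (T : finType) (S : {set T}).
Implicit Types s t : {perm T}.

(* Junk value [1] unless [s] maps the complement of [S] into itself. *)
Definition perm_restr s : {perm {x : T | x \notin S}} :=
  odflt 1%g [pick r : {perm {x : T | x \notin S}} | [forall x, val (r x) == s (val x)]].

Lemma perm_restrE s : {in S, forall x, s x = x} -> forall x, val (perm_restr s x) = s (val x).
Proof.
move=> sS; have sSc (x : {x : T | x \notin S}) : s (val x) \notin S.
  by apply: contra (valP x) => sxS; rewrite -(perm_inj (sS _ sxS)).
have restr_inj : injective (fun x => exist _ (s (val x)) (sSc x) : {x : T | x \notin S}).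
  by move=> x y /(congr1 val) /perm_inj /val_inj.
rewrite /perm_restr; case: pickP => [r /forallP rE | noperm] x; first exact/eqP.
by have /forallP[y] := noperm (perm restr_inj); rewrite permE.
Qed.

Lemma card_restr : #|{: {x : T | x \notin S}}| = #|T| - #|S|.
Proof. by rewrite card_sig -(cardsC S) addKn; apply: eq_card => x; rewrite !inE. Qed.

Section FixingS.
Variables s t : {perm T}.
Hypotheses (sS : {in S, forall x, s x = x}) (tS : {in S, forall x, t x = x}).

Lemma perm_dist_restr : perm_dist (perm_restr s) (perm_restr t) = perm_dist s t.
Proof.
rewrite /perm_dist -(card_imset _ val_inj); apply: eq_card => y; rewrite inE.
apply/imsetP/idP => [[x + ->] | st].
  by rewrite inE -(inj_eq val_inj) !perm_restrE.
have yS : y \notin S by apply: contra st => yS; rewrite sS ?tS.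
by exists (exist _ y yS); rewrite // inE -(inj_eq val_inj) !perm_restrE.
Qed.

Lemma perm_dist_add_agree :
  perm_dist s t + #|[set x | (x \notin S) && (s x == t x)]| = #|T| - #|S|.
Proof.
rewrite -{2}[S]setCK -cardsCs -(cardsID [set x | s x != t x] (~: S)).
rewrite /perm_dist; congr (_ + _); apply: eq_card => x; rewrite !inE.
  by apply/idP/andP => [st | [] //]; split=> //; apply: contra st => xS; rewrite sS ?tS.
by rewrite negbK andbC.
Qed.

End FixingS.

End Restriction.

Section TrivialTwoPointStabilizers.
Variables (T : finType) (G : {group {perm T}}).
Hypothesis fix2_G :
  {in G, forall (g : {perm T}) (x y : T), g x = x -> g y = y -> x != y -> g = 1%g}.

(* Each orbit of [<[g]>] on [U] is regular: [g ^+ j] fixing [x] also fixes [g x]. *)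
Lemma order_dvd_card_stable g U : g \in G -> stable g U ->
  {in U, forall x, g x != x} -> #[g]%g %| #|U|.
Proof.
move=> gG sU nfU.
have gU : g @: U = U.
  apply/eqP; rewrite eqEcard card_imset ?leqnn ?andbT; last exact: perm_inj.
  by apply/subsetP => _ /imsetP[x xU ->]; apply: sU.
have actU : [acts <[g]>%g, on U | 'P].
  rewrite cycle_subG; apply/astabsP => x /=.
  by rewrite /aperm -{1}gU (mem_imset _ _ (@perm_inj _ g)).
rewrite -(acts_sum_card_orbit actU); apply: dvdn_sum => _ /imsetP[x xU ->].
suff stab1 : ('C_<[g]>[x | 'P] = 1)%g.
  by rewrite /order -(card_orbit_stab 'P <[g]>%G x) stab1 cards1 muln1.
apply/trivgP/subsetP => _ /setIP[/cycleP[j ->] /astab1P /= gjx]; rewrite apermE in gjx.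
have gjgx : (g ^+ j)%g (g x) = g x by rewrite -permM -expgS expgSr permM gjx.
by rewrite inE (fix2_G (groupX j gG) gjx gjgx) // eq_sym nfU.
Qed.

Variable m : nat.
Hypothesis small_odd_order_G :
  {in G, forall g, odd #[g]%g -> #[g]%g <= 2 * m + 1 -> g = 1%g}.

Lemma stable_odd_fixpoint g U : g \in G -> g != 1%g -> stable g U -> odd #|U| ->
  #|U| <= 2 * m + 1 -> exists2 x, x \in U & g x = x.
Proof.
move=> gG g1 sU oU leU.
case: (pickP [pred x in U | g x == x]) => [x /andP[xU /eqP gx] | nfix]; first by exists x.
have nfU : {in U, forall x, g x != x}.
  by move=> x xU; move: (nfix x) => /=; rewrite xU => /negbT.
have dvdU := order_dvd_card_stable gG sU nfU.
have := leq_trans (dvdn_leq (odd_gt0 oU) dvdU) leU.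
by move/(small_odd_order_G gG (dvdn_odd dvdU oU))/eqP; rewrite (negbTE g1).
Qed.

Lemma odd_stable_family_card_le1 g Z P : g \in G -> g != 1%g ->
  odd_stable_family g Z P -> excess P <= m -> #|P| <= 1.
Proof.
move=> gG g1 [tP famP] exP.
have fixed U : U \in P -> exists2 x, x \in U & g x = x.
  move=> UP; have [sU oU _] := famP U UP; apply: stable_odd_fixpoint => //.
  rewrite -(odd_double_half #|U|) oU add1n -muln2 mulnC addn1 ltnS leq_mul2l /=.
  exact: leq_trans (excess_ge_half UP) exP.
apply/card_le1_eqP => U V UP VP; apply/eqP; apply: contraT => neUV.
have [x xU gx] := fixed U UP; have [y yV gy] := fixed V VP.
have xy : x != y.
  by apply: contraTneq yV => <-; rewrite (disjointFl (trivIsetP tP _ _ VP UP neUV) xU).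
by rewrite (fix2_G gG gx gy xy) eqxx in g1.
Qed.

Lemma card_contract_seq_agree s t (ps : seq T) : s \in G -> t \in G -> s != t ->
  uniq ps -> size ps = m ->
  #|[set x | (x \notin ps) && (contract_seq ps s x == contract_seq ps t x)]| <= m.+1.
Proof.
move=> sG tG st ups szps.
have [P [famP exP agreeP]] :=
  contract_seq_family (Z := set0) s t ups (fun p _ => negbT (in_set0 p)).
have tsG : (t * s^-1)%g \in G by rewrite groupM ?groupV.
have ts1 : (t * s^-1)%g != 1%g by rewrite -eq_mulgV1 eq_sym.
have P1 := odd_stable_family_card_le1 tsG ts1 famP (leq_trans exP (eq_leq szps)).
apply: leq_trans (leq_trans agreeP _); last by rewrite szps -addn1 leq_add2l.
by apply/subset_leq_card/subsetP => x; rewrite !inE.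
Qed.

Theorem card_le_M_contracted : 2 * m + 1 < #|T| ->
  #|G| <= M (#|T| - m) (#|T| - 2 * m - 1).
Proof.
move=> mT; set ps := take m (enum T).
have szps : size ps = m.
  by rewrite size_takel // -cardE; apply: leq_trans (ltnW mT); lia.
have ups : uniq ps by rewrite take_uniq ?enum_uniq.
set S := [set x in ps].
have cardS : #|S| = m by rewrite cardsE (card_uniqP ups).
have fixS s : {in S, forall x, contract_seq ps s x = x}.
  by move=> x; rewrite inE => xps; rewrite contract_seq_fix ?xps.
have -> : #|T| - m = #|{: {x : T | x \notin S}}| by rewrite card_restr cardS.
apply: (card_le_M (f := fun s => perm_restr S (contract_seq ps s))); first by lia.
  by apply/set0Pn; exists 1%g.
move=> s t sG tG st; rewrite perm_dist_restr ?fixS //.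
have := perm_dist_add_agree (fixS s) (fixS t).
have := card_contract_seq_agree sG tG st ups szps.
have -> : [set x | (x \notin S) && (contract_seq ps s x == contract_seq ps t x)] =
          [set x | (x \notin ps) && (contract_seq ps s x == contract_seq ps t x)].
  by apply/setP => x; rewrite !inE.
rewrite cardS; lia.
Qed.

End TrivialTwoPointStabilizers.

Section AffineGroup.
Variable F : finFieldType.
Local Open Scope ring_scope.
Implicit Types (u v : {unit F}) (b c x : F).

Lemma natr_card : #|F|%:R = 0 :> F.
Proof. by rewrite -[_%:R]zmodXgE -cardsT expg_cardG ?inE. Qed.

Lemma affine_inj u b : injective (fun x => val u * x + b).
Proof. by move=> x y /addIr /(mulrI (valP u)). Qed.

Definition affine u b : {perm F} := perm (@affine_inj u b).

Lemma affineE u b x : affine u b x = val u * x + b.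
Proof. exact: permE. Qed.

Lemma affine1 : affine 1%g 0 = 1%g.
Proof. by apply/permP => x; rewrite affineE perm1 mul1r addr0. Qed.

Lemma affineM u b v c : (affine u b * affine v c)%g = affine (u * v)%g (val v * b + c).
Proof. by apply/permP => x; rewrite permM !affineE val_unitM; ring. Qed.

Lemma affineX u b n :
  (affine u b ^+ n)%g = affine (u ^+ n)%g (b * \sum_(i < n) val u ^+ i).
Proof.
elim: n => [|n IHn]; first by rewrite !expg0 big_ord0 mulr0 affine1.
by rewrite !expgS IHn affineM big_ord_recr /= val_unitX; congr affine; ring.
Qed.

Definition AGL : {set {perm F}} := [set affine ub.1 ub.2 | ub : {unit F} * F].

Lemma AGL_group_set : group_set AGL.
Proof.
apply/group_setP; split; first by apply/imsetP; exists (1%g, 0); rewrite ?affine1.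
move=> _ _ /imsetP[[u b] _ ->] /imsetP[[v c] _ ->].
by rewrite affineM; apply/imsetP; exists ((u * v)%g, val v * b + c).
Qed.

Canonical AGL_group := group AGL_group_set.

Lemma card_AGL : #|AGL| = (#|F| * (#|F| - 1))%N.
Proof.
rewrite card_imset; last first.
  move=> [u b] [v c] /= e.
  have e0 := congr1 (fun g : {perm F} => g 0) e; have e1 := congr1 (fun g : {perm F} => g 1) e.
  move: e0 e1; rewrite /= !affineE !mulr0 !add0r !mulr1 => -> /addIr uv.
  by rewrite (val_inj uv).
by rewrite card_prod -cardsT card_finField_unit subn1 mulnC.
Qed.

Lemma AGL_fix2 :
  {in AGL, forall (g : {perm F}) x y, g x = x -> g y = y -> x != y -> g = 1%g}.
Proof.
move=> _ /imsetP[[u b] _ ->] x y /=; rewrite !affineE => ux uy xy.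
have u1 : val u = 1.
  apply: (mulIf (_ : x - y != 0)); first by rewrite subr_eq0.
  by rewrite mul1r mulrBr -{2}ux -{2}uy; ring.
have b0 : b = 0 by move: ux; rewrite u1 mul1r -{2}[x]addr0 => /addrI.
by rewrite -affine1 b0; congr affine; apply: val_inj.
Qed.

Lemma order_AGL g : g \in AGL -> (#[g]%g %| #|F|)%N || (#[g]%g %| #|F|.-1)%N.
Proof.
move=> /imsetP[[u b] _ ->] /=; rewrite !order_dvdn !affineX -affine1.
have [u1 | u_neq1] := eqVneq (val u) 1.
  rewrite u1; under eq_bigr do rewrite expr1n.
  rewrite sumr_const card_ord natr_card mulr0 (_ : (u ^+ _)%g = 1%g) ?eqxx //.
  by apply: val_inj; rewrite val_unitX u1 expr1n.
have uq : (u ^+ #|F|.-1)%g = 1%g by rewrite -card_finField_unit expg_cardG ?inE.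
suff -> : \sum_(i < #|F|.-1) val u ^+ i = 0 by rewrite uq mulr0 eqxx orbT.
apply: (mulfI (_ : val u - 1 != 0)); first by rewrite subr_eq0.
by rewrite -subrX1 -val_unitX uq subrr mulr0.
Qed.

End AffineGroup.

Lemma dvdn_pred_modn k q : 1 < k -> 0 < q -> k %| q.-1 -> q %% k = 1.
Proof.
move=> k1 q0 /dvdnP[c qc].
by rewrite -(prednK q0) qc -addn1 modnMDl modn_small.
Qed.

Lemma small_odd_divisor_eq1 q m k : 0 < q ->
  (forall i, 1 <= i <= m -> q %% (2 * i + 1) != 0 /\ q %% (2 * i + 1) != 1) ->
  odd k -> k <= 2 * m + 1 -> (k %| q) || (k %| q.-1) -> k = 1.
Proof.
move=> q0 qmod ok km kq; apply/eqP; apply: contraT => k_neq1.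
have [i i1m ki] : exists2 i, 1 <= i <= m & k = 2 * i + 1.
  exists k./2; last by rewrite -{1}(odd_double_half k) ok addnC -muln2 mulnC.
  move: km k_neq1; rewrite -{1 2}(odd_double_half k) ok -muln2; lia.
have [qk0 qk1] := qmod i i1m; rewrite -ki in qk0 qk1.
case/orP: kq => kq; first by move: qk0; rewrite (eqP kq).
have k1 : 1 < k by case/andP: i1m; lia.
by rewrite (dvdn_pred_modn k1 q0 kq) in qk1.
Qed.

Theorem corollary5p4 (q m : nat) :
  prime_power q -> 0 < m -> 2 * m + 1 < q ->
  (forall i, 1 <= i <= m ->
     q %% (2 * i + 1) != 0 /\ q %% (2 * i + 1) != 1) ->
  q * (q - 1) <= M (q - m) (q - 2 * m - 1).
Proof.
move=> [p [k [pp [k0 ->]]]] _ mq qmod.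
have [F _ cardF] := pPrimePowerField pp k0.
rewrite -cardF in mq qmod *; rewrite -card_AGL.
have q_gt0 : 0 < #|F| by lia.
apply: card_le_M_contracted mq; first exact: AGL_fix2.
move=> g gG oddg gm; apply/eqP; rewrite -order_eq1; apply/eqP.
exact: small_odd_divisor_eq1 q_gt0 qmod oddg gm (order_AGL gG).
Qed.
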